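(* Let $\Omega_T$ be the infinite triangular lattice graph, i.e. the graph with vertex set $\mathbb{Z}^2$ in which $(a,b)$ is adjacent to $(a\pm1,b)$, $(a,b\pm1)$, $(a+1,b+1)$ and $(a-1,b-1)$ (a 6-regular graph). Then $\chi_{td}(\Omega_T) = 12$.
   Context: For a (possibly infinite) simple graph $G$ and a positive integer $k$, a proper $k$-total difference labeling of $G$ is a function $f: V(G)\to\{1,\dots,k\}$, extended to edges by $f(\{u,v\}) = |f(u)-f(v)|$, such that: (i) adjacent vertices receive different labels; (ii) two distinct edges sharing a vertex receive different labels; (iii) no edge receives the same label as either of its endpoints. $\chi_{td}(G)$ denotes the smallest $k$ for which $G$ has a proper $k$-total difference labeling. *)

From Stdlib Require Import ZArith Lia.
Open Scope Z_scope.

Record graph := { vtx : Type; adj : vtx -> vtx -> Prop }.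

Definition tri_adj (p q : Z * Z) : Prop :=
  let (a, b) := p in let (c, d) := q in
  (c = a + 1 /\ d = b) \/ (c = a - 1 /\ d = b) \/
  (c = a /\ d = b + 1) \/ (c = a /\ d = b - 1) \/
  (c = a + 1 /\ d = b + 1) \/ (c = a - 1 /\ d = b - 1).

Definition Omega_T : graph := {| vtx := Z * Z; adj := tri_adj |}.

Definition elab {V : Type} (f : V -> Z) (u v : V) : Z := Z.abs (f u - f v).

Definition proper_td_labeling (G : graph) (k : Z) (f : vtx G -> Z) : Prop :=
  (forall v, 1 <= f v <= k) /\
  (forall u v, adj G u v -> f u <> f v) /\
  (forall v u w, adj G v u -> adj G v w -> u <> w -> elab f v u <> elab f v w) /\
  (forall u v, adj G u v -> elab f u v <> f u /\ elab f u v <> f v).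

Definition has_td_labeling (G : graph) (k : Z) : Prop :=
  exists f : vtx G -> Z, proper_td_labeling G k f.

Definition chi_td_eq (G : graph) (k : Z) : Prop :=
  1 <= k /\ has_td_labeling G k /\ (forall j, 1 <= j < k -> ~ has_td_labeling G j).

From Stdlib Require Import ZArith Lia List Bool.
Import ListNotations.
Open Scope Z_scope.

(* Lower bound: at a vertex labelled x, the six incident edges carry pairwise
   distinct labels |x - y|, each avoiding both x and the neighbour label y, so
   x must admit at least six such differences with labels still in play.
   Discarding the labels that do not, and repeating, empties {1..11} after five
   rounds.  Upper bound: the neighbours of (a, b) have a + 2b shifted by
   ±1, ±2, ±3, so a labeling that depends only on (a + 2b) mod 9 is checked on
   the nine residues alone. *)

Lemma NoDup_map_pairwise_neq {A B : Type} (g : A -> B) (l : list A) :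
  NoDup l -> (forall u w, In u l -> In w l -> u <> w -> g u <> g w) ->
  NoDup (map g l).
Proof.
  induction 1 as [|x l Hx Hl IH]; intros Hg; simpl; constructor.
  - intros Hin. apply in_map_iff in Hin as [y [Hy Hyl]].
    apply (Hg x y); simpl; auto. intros ->. contradiction.
  - apply IH. intros u w Hu Hw. apply Hg; simpl; auto.
Qed.

Definition min_degree_ge (G : graph) (d : nat) : Prop :=
  forall v : vtx G, exists ns : list (vtx G),
    NoDup ns /\ (d <= length ns)%nat /\ forall u, In u ns -> adj G v u.

Lemma has_td_labeling_mono (G : graph) (j k : Z) :
  j <= k -> has_td_labeling G j -> has_td_labeling G k.
Proof.
  intros Hjk [f [Hrange Hf]]. exists f. split; [|exact Hf].
  intros v. specialize (Hrange v). lia.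
Qed.

Definition compatible_label (x y : Z) : bool :=
  negb (x =? y) && negb (Z.abs (x - y) =? x) && negb (Z.abs (x - y) =? y).

Lemma compatible_labelP (x y : Z) :
  compatible_label x y = true <-> x <> y /\ Z.abs (x - y) <> x /\ Z.abs (x - y) <> y.
Proof.
  unfold compatible_label.
  rewrite !andb_true_iff, !negb_true_iff, !Z.eqb_neq. tauto.
Qed.

Definition edge_label_options (L : list Z) (x : Z) : list Z :=
  nodup Z.eq_dec (map (fun y => Z.abs (x - y)) (filter (compatible_label x) L)).

Definition prune (d : nat) (L : list Z) : list Z :=
  filter (fun x => (d <=? length (edge_label_options L x))%nat) L.

Section Pruning.

Variables (G : graph) (d : nat) (k : Z) (f : vtx G -> Z).
Hypothesis G_min_degree : min_degree_ge G d.
Hypothesis f_proper : proper_td_labeling G k f.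

Lemma labels_in_prune (L : list Z) :
  (forall v, In (f v) L) -> forall v, In (f v) (prune d L).
Proof.
  destruct f_proper as [_ [Hvertex [Hedge Hend]]].
  intros HL v. apply filter_In. split; [apply HL|]. apply Nat.leb_le.
  destruct (G_min_degree v) as [ns [Hnodup [Hlen Hadj]]].
  apply (Nat.le_trans _ _ _ Hlen). rewrite <- (length_map (elab f v)).
  apply NoDup_incl_length.
  - apply NoDup_map_pairwise_neq; [exact Hnodup|].
    intros u w Hu Hw. exact (Hedge v u w (Hadj u Hu) (Hadj w Hw)).
  - intros e He. apply in_map_iff in He as [u [<- Hu]].
    apply nodup_In, in_map_iff. exists (f u). split; [reflexivity|].
    apply filter_In. split; [apply HL|]. apply compatible_labelP.
    specialize (Hvertex v u (Hadj u Hu)). specialize (Hend v u (Hadj u Hu)).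
    unfold elab in Hend. tauto.
Qed.

Lemma labels_in_iter_prune (L : list Z) :
  (forall v, In (f v) L) -> forall n v, In (f v) (Nat.iter n (prune d) L).
Proof.
  intros HL n. induction n as [|n IH]; [exact HL|].
  rewrite Nat.iter_succ. exact (labels_in_prune _ IH).
Qed.

End Pruning.

Lemma no_td_labeling_of_prune_nil (G : graph) (d : nat) (k : Z) (L : list Z) (n : nat) :
  vtx G -> min_degree_ge G d -> (forall z, 1 <= z <= k -> In z L) ->
  Nat.iter n (prune d) L = [] -> ~ has_td_labeling G k.
Proof.
  intros v0 Hdeg HL Hnil [f Hf].
  assert (Hlabels : forall v, In (f v) L) by (intros v; apply HL, (proj1 Hf)).
  pose proof (labels_in_iter_prune G d k f Hdeg Hf L Hlabels n v0) as Hin.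
  rewrite Hnil in Hin. exact Hin.
Qed.

Definition tri_dirs : list (Z * Z) := [(1, 0); (-1, 0); (0, 1); (0, -1); (1, 1); (-1, -1)].

Definition shift (p dir : Z * Z) : Z * Z := (fst p + fst dir, snd p + snd dir).

Lemma tri_adj_shift (p q : Z * Z) :
  tri_adj p q <-> exists dir, In dir tri_dirs /\ q = shift p dir.
Proof.
  destruct p as [a b], q as [c d]. unfold shift; simpl. split.
  - intros [[-> ->]|[[-> ->]|[[-> ->]|[[-> ->]|[[-> ->]|[-> ->]]]]]];
      [exists (1, 0)|exists (-1, 0)|exists (0, 1)|exists (0, -1)|exists (1, 1)|exists (-1, -1)];
      (split; [simpl; tauto|f_equal; simpl; ring]).
  - intros [dir [Hdir Hq]]. simpl in Hdir.
    repeat destruct Hdir as [<-|Hdir]; try contradiction; injection Hq; lia.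
Qed.

Lemma Omega_T_min_degree : min_degree_ge Omega_T 6.
Proof.
  intros p. exists (map (shift p) tri_dirs). split; [|split].
  - apply NoDup_map_pairwise_neq.
    + repeat constructor; simpl; intuition discriminate.
    + intros u w _ _ Hne Heq. apply Hne. destruct p, u, w.
      unfold shift in Heq; simpl in Heq. injection Heq. intros. f_equal; lia.
  - reflexivity.
  - intros q Hq. apply in_map_iff in Hq as [dir [<- Hdir]].
    apply tri_adj_shift. eauto.
Qed.

Lemma Omega_T_no_11_labeling : ~ has_td_labeling Omega_T 11.
Proof.
  apply (no_td_labeling_of_prune_nil _ 6 _ [1; 2; 3; 4; 5; 6; 7; 8; 9; 10; 11] 5).
  - exact (0, 0).
  - exact Omega_T_min_degree.
  - intros z Hz. simpl. lia.
  - vm_compute. reflexivity.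
Qed.

Definition dir_eqb (x y : Z * Z) : bool := (fst x =? fst y) && (snd x =? snd y).

Lemma dir_eqbP (x y : Z * Z) : dir_eqb x y = true <-> x = y.
Proof.
  destruct x, y. unfold dir_eqb; simpl.
  rewrite andb_true_iff, !Z.eqb_eq. split; [intros [-> ->]|intros [= -> ->]]; auto.
Qed.

Section PeriodicLabeling.

Variables (m c1 c2 k : Z) (g : Z -> Z).

Definition linear_form (p : Z * Z) : Z := c1 * fst p + c2 * snd p.

Definition periodic_labeling (p : Z * Z) : Z := g (linear_form p mod m).

Definition shifted_label (r : Z) (dir : Z * Z) : Z := g ((r + linear_form dir) mod m).

Definition residue_check (r : Z) : bool :=
  let edge dir := Z.abs (g r - shifted_label r dir) in
  (1 <=? g r) && (g r <=? k) &&
  forallb (fun dir => compatible_label (g r) (shifted_label r dir)) tri_dirs &&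
  forallb (fun dir => forallb (fun dir' =>
    dir_eqb dir dir' || negb (edge dir =? edge dir')) tri_dirs) tri_dirs.

Definition periodic_check : bool :=
  forallb residue_check (map Z.of_nat (seq 0 (Z.to_nat m))).

Lemma residue_checkP (r : Z) :
  residue_check r = true ->
  1 <= g r <= k /\
  (forall dir, In dir tri_dirs -> compatible_label (g r) (shifted_label r dir) = true) /\
  (forall dir dir', In dir tri_dirs -> In dir' tri_dirs -> dir <> dir' ->
     Z.abs (g r - shifted_label r dir) <> Z.abs (g r - shifted_label r dir')).
Proof.
  unfold residue_check.
  rewrite !andb_true_iff, Z.leb_le, Z.leb_le, !forallb_forall.
  intros [[[Hlo Hhi] Hcompat] Hdistinct]. split; [lia|]. split; [exact Hcompat|].
  intros dir dir' Hdir Hdir' Hne.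
  specialize (Hdistinct dir Hdir). rewrite forallb_forall in Hdistinct.
  specialize (Hdistinct dir' Hdir'). apply orb_true_iff in Hdistinct.
  destruct Hdistinct as [Heq|Hneq]; [contradiction (proj1 (dir_eqbP _ _) Heq)|].
  apply negb_true_iff, Z.eqb_neq in Hneq. exact Hneq.
Qed.

Hypothesis m_pos : 0 < m.
Hypothesis check_ok : periodic_check = true.

Lemma periodic_labeling_shift (p dir : Z * Z) :
  periodic_labeling (shift p dir) = shifted_label (linear_form p mod m) dir.
Proof.
  unfold periodic_labeling, shifted_label. rewrite Zplus_mod_idemp_l.
  unfold linear_form, shift; simpl. f_equal. f_equal. ring.
Qed.

Lemma residue_check_at (p : Z * Z) : residue_check (linear_form p mod m) = true.
Proof.
  unfold periodic_check in check_ok. rewrite forallb_forall in check_ok.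
  apply check_ok, in_map_iff. exists (Z.to_nat (linear_form p mod m)).
  pose proof (Z.mod_pos_bound (linear_form p) m m_pos).
  rewrite Z2Nat.id by lia. split; [reflexivity|]. apply in_seq. lia.
Qed.

Lemma periodic_labeling_compatible (u v : Z * Z) :
  tri_adj u v -> compatible_label (periodic_labeling u) (periodic_labeling v) = true.
Proof.
  intros [dir [Hdir ->]]%tri_adj_shift. rewrite periodic_labeling_shift.
  apply (residue_checkP _ (residue_check_at u)), Hdir.
Qed.

Lemma periodic_labeling_proper : proper_td_labeling Omega_T k periodic_labeling.
Proof.
  split; [|split; [|split]]; simpl.
  - intros p. apply (residue_checkP _ (residue_check_at p)).
  - intros u v Huv. apply compatible_labelP, periodic_labeling_compatible, Huv.
  - intros v u w [dir [Hdir ->]]%tri_adj_shift [dir' [Hdir' ->]]%tri_adj_shift Hne.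
    unfold elab. rewrite !periodic_labeling_shift.
    apply (residue_checkP _ (residue_check_at v)); [exact Hdir|exact Hdir'|].
    intros <-. contradiction.
  - intros u v Huv. apply periodic_labeling_compatible, compatible_labelP in Huv.
    unfold elab. tauto.
Qed.

End PeriodicLabeling.

Definition tri_label : Z * Z -> Z :=
  periodic_labeling 9 1 2 (fun r => nth (Z.to_nat r) [1; 3; 12; 11; 8; 2; 7; 10; 9] 0).

Lemma tri_label_proper : proper_td_labeling Omega_T 12 tri_label.
Proof. apply periodic_labeling_proper; [lia|vm_compute; reflexivity]. Qed.

Theorem mainTheorem4 : chi_td_eq Omega_T 12.
Proof.
  split; [lia|]. split.
  - exists tri_label. exact tri_label_proper.
  - intros j Hj Hlab. apply Omega_T_no_11_labeling.
    apply (has_td_labeling_mono _ j); [lia|exact Hlab].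
Qed.
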